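(* In a snark $G$ with $\pi(G)\ge 5$, no apex is incident with a pair of parallel edges.
   Context: Graphs are finite; loops and multiple edges are allowed. A snark is a $2$-connected cubic graph with no proper $3$-edge-colouring. The perfect matching index $\pi(G)$ is the smallest number of perfect matchings of $G$ whose union is $E(G)$. Inflating a vertex $v$ to a triangle means deleting $v$, adding a triangle on three new vertices, and attaching the three edge-ends formerly incident with $v$ to the three distinct vertices of the triangle; the result is denoted $G^v$. A vertex $v$ of a snark $G$ is an apex if $\pi(G^v)=4$. *)

(* Multigraphs (loops and multiple edges allowed) are
   represented by darts (half-edges): each dart has an end vertex, and the
   two darts of an edge are swapped by a fixed-point-free involution. *)
From mathcomp Require Import all_boot.
Set Implicit Arguments. Unset Strict Implicit. Unset Printing Implicit Defensive.

Record multigraph := MultiGraph {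
  vtx : finType;
  dart : finType;
  vert : dart -> vtx;
  opp : dart -> dart
}.

Definition wf (G : multigraph) : Prop :=
  (forall d : dart G, opp (opp d) = d) /\ (forall d : dart G, opp d != d).

(* darts (edge-ends) at a vertex; a loop contributes two darts *)
Definition darts_at (G : multigraph) (v : vtx G) : {set dart G} :=
  [set d | vert d == v].

Definition cubic (G : multigraph) : Prop :=
  forall v : vtx G, #|darts_at v| = 3.

Definition adj (G : multigraph) : rel (vtx G) :=
  fun u w => [exists d : dart G, (vert d == u) && (vert (opp d) == w)].

Definition connected (G : multigraph) : Prop :=
  forall u w : vtx G, connect (@adj G) u w.

Definition connected_minus (G : multigraph) (v : vtx G) : Prop :=
  forall u w : vtx G, u != v -> w != v ->
    connect (fun x y => [&& x != v, y != v & adj x y]) u w.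

Definition two_connected (G : multigraph) : Prop :=
  [/\ connected G, 3 <= #|vtx G| & forall v : vtx G, connected_minus v].

(* proper 3-edge-colouring: colour darts, both ends of an edge get the same
   colour, distinct edge-ends at a vertex get distinct colours (so a loop
   is never properly coloured) *)
Definition three_edge_colourable (G : multigraph) : Prop :=
  exists c : dart G -> 'I_3,
    (forall d, c (opp d) = c d) /\
    (forall d1 d2, d1 != d2 -> vert d1 = vert d2 -> c d1 != c d2).

Definition snark (G : multigraph) : Prop :=
  [/\ wf G, two_connected G, cubic G & ~ three_edge_colourable G].

(* a perfect matching, as the set of darts of its edges: closed under opp,
   and exactly one matched edge-end at every vertex (so no loops) *)
Definition perfect_matching (G : multigraph) (M : {set dart G}) : Prop :=
  (forall d, (opp d \in M) = (d \in M)) /\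
  (forall v : vtx G, #|M :&: darts_at v| = 1).

Definition pm_coverable (G : multigraph) (k : nat) : Prop :=
  exists Ms : 'I_k -> {set dart G},
    (forall i, perfect_matching (Ms i)) /\
    (forall d : dart G, exists i, d \in Ms i).

Definition is_pmi (G : multigraph) (k : nat) : Prop :=
  pm_coverable G k /\ (forall j, j < k -> ~ pm_coverable G j).

(* Inflation of v to a triangle.  The new vertices are the old ones other
   than v, plus three triangle vertices indexed by 'I_3.  The edge-ends at v
   are reattached to triangle vertices according to g : dart G -> 'I_3
   (required to be injective on the darts at v).  Triangle edge i joins
   triangle vertex i to triangle vertex i+1 (mod 3). *)
Section Inflate.
Variables (G : multigraph) (v : vtx G) (g : dart G -> 'I_3).

Definition infl_vtx : finType := ({x : vtx G | x != v} + 'I_3)%type.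
Definition infl_dart : finType := (dart G + ('I_3 * bool))%type.

Definition infl_vert (d : infl_dart) : infl_vtx :=
  match d with
  | inl e => match insub (vert e) with
             | Some x => inl x
             | None => inr (g e)
             end
  | inr (i, true) => inr i
  | inr (i, false) => inr (ordS i)
  end.

Definition infl_opp (d : infl_dart) : infl_dart :=
  match d with
  | inl e => inl (opp e)
  | inr (i, b) => inr (i, ~~ b)
  end.

Definition inflate : multigraph := @MultiGraph infl_vtx infl_dart infl_vert infl_opp.
End Inflate.

Definition valid_attach (G : multigraph) (v : vtx G) (g : dart G -> 'I_3) :=
  {in darts_at v &, injective g}.

(* v is an apex: pi(G^v) = 4 (G^v is unique up to isomorphism) *)
Definition apex (G : multigraph) (v : vtx G) : Prop :=
  exists g : dart G -> 'I_3, valid_attach v g /\ is_pmi (inflate v g) 4.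

Definition on_parallel_pair (G : multigraph) (v : vtx G) : Prop :=
  exists d1 d2 : dart G,
    [/\ vert d1 = v, vert d2 = v, d2 != d1, d2 != opp d1 &
        vert (opp d1) = vert (opp d2)].

From mathcomp Require Import all_boot zify.
From Stdlib Require Import Classical.
Set Implicit Arguments. Unset Strict Implicit. Unset Printing Implicit Defensive.

(* A perfect matching M of G^v contains an odd number of the three edges at v,
   since every triangle edge in M covers two of the three triangle vertices.
   If v lies on parallel edges e, f, their common other end u differs from v
   (v has degree 3), so M cannot contain all three edges at v: e and f would
   both be matched at u.  Hence M restricts to a perfect matching of G, and
   four perfect matchings covering G^v give four covering G: pi(G) <= 4. *)

Section Restriction.
Variables (G : multigraph) (v : vtx G) (g : dart G -> 'I_3).
Local Notation Gv := (inflate v g).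

Definition restrict_darts (M : {set dart Gv}) : {set dart G} :=
  [set d | (inl d : dart Gv) \in M].

Definition triangle_darts : {set dart Gv} :=
  [set x | ~~ is_inl (infl_vert v g x)].

Definition triangle_index (x : dart Gv) : 'I_3 :=
  if infl_vert v g x is inr i then i else ord0.

Lemma infl_vert_inl_old (e : dart G) (w : {x | x != v}) :
  (infl_vert v g (inl e) == inl w) = (vert e == val w).
Proof.
rewrite /=; case: insubP => [x _ <-|/negPn/eqP ->].
  by apply/eqP/eqP => [[->]|/val_inj->].
by apply/esym/negbTE; rewrite eq_sym (valP w).
Qed.

Lemma infl_vert_inl_triangle (e : dart G) :
  ~~ is_inl (infl_vert v g (inl e)) = (vert e == v).
Proof. by rewrite /=; case: insubP => [x /negbTE -> //|/negPn ->]. Qed.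

Variables (M : {set dart Gv}) (pmM : perfect_matching M).

Lemma restrict_darts_opp d : (opp d \in restrict_darts M) = (d \in restrict_darts M).
Proof. by rewrite !inE (pmM.1 (inl d)). Qed.

Lemma card_restrict_darts_at_old w :
  w != v -> #|restrict_darts M :&: darts_at w| = 1.
Proof.
move=> wv; pose w' : {x | x != v} := exist _ w wv.
rewrite -(pmM.2 (inl w')) -(card_imset _ (@inl_inj _ ('I_3 * bool))).
apply: eq_card => -[e|[i b]]; rewrite !inE.
  rewrite (infl_vert_inl_old e w') /=.
  apply/imsetP/idP => [[y] |/andP[eM ew]]; last by exists e; rewrite // !inE eM.
  by rewrite !inE => /andP[yM yw] [->]; rewrite yM.
by apply/imsetP/idP => [[y _ //]|]; case: b => /andP[].
Qed.

Lemma card_matched_triangle_darts : #|M :&: triangle_darts| = 3.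
Proof.
rewrite -sum1_card (partition_big triangle_index predT) //=.
rewrite (eq_bigr (fun _ => 1)) ?sum_nat_const ?card_ord // => i _.
rewrite -[RHS](pmM.2 (inr i)) -sum1_card; apply: eq_bigl => x.
rewrite !inE /triangle_index /=.
by case: (infl_vert v g x) => [y|j]; rewrite ?andbF ?andbT.
Qed.

Lemma matched_triangle_darts_old :
  (M :&: triangle_darts) :&: [set x | is_inl x]
    = inl @: (restrict_darts M :&: darts_at v).
Proof.
apply/setP => -[e|p]; rewrite !inE /=; last first.
  by rewrite andbF; apply/esym/imsetP => -[].
by rewrite infl_vert_inl_triangle andbT (mem_imset _ _ inl_inj) !inE.
Qed.

Lemma matched_triangle_darts_new :
  (M :&: triangle_darts) :\: [set x | is_inl x]
    = inr @: setX [set i | (inr (i, true) : dart Gv) \in M] [set: bool].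
Proof.
apply/setP => -[e|[i b]]; rewrite !inE /=.
  by apply/esym/imsetP => -[].
rewrite (mem_imset _ _ inr_inj) !inE andbT.
have -> : ~~ is_inl (infl_vert v g (inr (i, b))) by case: b.
by case: b; rewrite andbT // -(pmM.1 (inr (i, false))).
Qed.

Lemma card_restrict_darts_at_v :
  #|restrict_darts M :&: darts_at v| + #|[set i | (inr (i, true) : dart Gv) \in M]| * 2 = 3.
Proof.
rewrite -[RHS]card_matched_triangle_darts -(cardsID [set x | is_inl x]).
rewrite matched_triangle_darts_old matched_triangle_darts_new.
by rewrite !card_imset ?cardsX ?cardsT ?card_bool //; [exact: inr_inj | exact: inl_inj].
Qed.

End Restriction.

Section ParallelPair.
Variables (G : multigraph) (v : vtx G) (d1 d2 : dart G).
Hypotheses (wfG : wf G) (cubG : cubic G).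
Hypotheses (d1v : vert d1 = v) (d2v : vert d2 = v).
Hypotheses (d21 : d2 != d1) (d2o1 : d2 != opp d1) (far : vert (opp d1) = vert (opp d2)).

Lemma opp_parallel_neq : opp d1 != opp d2.
Proof. by rewrite (inj_eq (can_inj wfG.1)) eq_sym. Qed.

Lemma parallel_far_end_neq : vert (opp d1) != v.
Proof.
have [oppK opp_neq] := wfG.
apply/negP => /eqP far_v.
have d1o2 : d1 != opp d2 by apply: contra d2o1 => /eqP->; rewrite oppK.
have four : uniq [:: d1; d2; opp d1; opp d2].
  rewrite /= !inE !negb_or eq_sym d21 eq_sym opp_neq d1o2 d2o1.
  by rewrite eq_sym opp_neq opp_parallel_neq.
have at_v : [:: d1; d2; opp d1; opp d2] \subset darts_at v.
  by apply/subsetP => x; rewrite !inE => /or4P[] /eqP->; rewrite ?d1v ?d2v -?far ?far_v.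
by have := subset_leq_card at_v; rewrite (card_uniqP four) cubG.
Qed.

Variables (g : dart G -> 'I_3) (M : {set dart (inflate v g)}) (pmM : perfect_matching M).

Lemma card_restrict_darts_at_v_parallel : #|restrict_darts M :&: darts_at v| = 1.
Proof.
have not_all : #|restrict_darts M :&: darts_at v| != 3.
  apply/eqP => all3.
  have all_v : restrict_darts M :&: darts_at v = darts_at v.
    by apply/eqP; rewrite eqEcard subsetIr all3 cubG.
  have opp_in d : vert d = v -> opp d \in restrict_darts M.
    move=> dv; rewrite (restrict_darts_opp pmM).
    have : d \in darts_at v by rewrite inE dv.
    by rewrite -all_v inE => /andP[].
  have two : [set opp d1; opp d2] \subset restrict_darts M :&: darts_at (vert (opp d1)).
    by apply/subsetP => x /set2P[]->; rewrite in_setI opp_in // inE far eqxx.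
  have := subset_leq_card two.
  by rewrite cards2 opp_parallel_neq (card_restrict_darts_at_old pmM) // parallel_far_end_neq.
have at_most3 : #|restrict_darts M :&: darts_at v| <= 3.
  by rewrite -(cubG v) subset_leq_card // subsetIr.
have := card_restrict_darts_at_v pmM; lia.
Qed.

Lemma restrict_darts_perfect_matching : perfect_matching (restrict_darts M).
Proof.
split=> [d|w]; first exact: restrict_darts_opp.
have [->|wv] := eqVneq w v; first exact: card_restrict_darts_at_v_parallel.
exact: card_restrict_darts_at_old.
Qed.

End ParallelPair.

Lemma pm_coverable_inflate_parallel (G : multigraph) (v : vtx G) (g : dart G -> 'I_3) k :
  wf G -> cubic G -> on_parallel_pair v ->
  pm_coverable (inflate v g) k -> pm_coverable G k.
Proof.
move=> wfG cubG [d1 [d2 [d1v d2v d21 d2o1 far]]] [Ms [pmMs cover]].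
exists (fun i => restrict_darts (Ms i)); split=> [i|d].
  exact: (restrict_darts_perfect_matching wfG cubG d1v d2v d21 d2o1 far (pmMs i)).
by have [i dMi] := cover (inl d); exists i; rewrite inE.
Qed.

Lemma pm_coverable_is_pmi (G : multigraph) n :
  pm_coverable G n -> exists2 k, k <= n & is_pmi G k.
Proof.
elim/ltn_ind: n => n IH cov_n.
have [[j jn cov_j]|minimal] := classic (exists2 j, j < n & pm_coverable G j).
  have [k kj pmi_k] := IH j jn cov_j.
  by exists k => //; apply: leq_trans kj (ltnW jn).
by exists n => //; split=> // j jn cov_j; apply: minimal; exists j.
Qed.

Theorem lemma6p5 (G : multigraph) (v : vtx G) :
  snark G ->
  (forall k, is_pmi G k -> 5 <= k) ->
  apex v ->
  ~ on_parallel_pair v.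
Proof.
move=> [wfG _ cubG _] pmi_ge5 [g [_ [cov4 _]]] parallel.
have [k k4 pmi_k] := pm_coverable_is_pmi (pm_coverable_inflate_parallel wfG cubG parallel cov4).
by have := pmi_ge5 k pmi_k; rewrite leqNgt ltnS k4.
Qed.
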